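(* Fix $\gamma\in(0,1]$ and $0<\alpha<0.25$, let $\xi>0$ be arbitrarily small, and set $\tilde k=(\alpha+\xi)\log_2N$. Then for all sufficiently large $N$ and every integer $k$ with $\tilde k\le k\le b$, $$\lambda(s^*_k+1)\le\lambda(\lambda^{2^k-1}+1)\le\sqrt\lambda.$$
   Context: Let $N\ge1$, $\lambda=1-\gamma/N^\alpha$, and $b=b(N)\ge1$ an integer with $b=O(\log N)$. The mean-field vector field is $f_k(s)=\lambda(s_{k-1}^2-s_k^2)-(s_k-s_{k+1})$, $k=1,\dots,b$, with $s_0=1,s_{b+1}=0$, and $s^*$ is its unique equilibrium in $\{s\in\mathbb R^b:1\ge s_1\ge\cdots\ge s_b\ge0\}$, i.e. $s^*_0=1$, $\lambda((s^*_{k-1})^2-(s^*_k)^2)-(s^*_k-s^*_{k+1})=0$ for $1\le k\le b-1$ and $\lambda((s^*_{b-1})^2-(s^*_b)^2)-s^*_b=0$. *)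

From Stdlib Require Import Reals Lra Lia.
Open Scope R_scope.

Definition lam (gamma alpha : R) (N : nat) : R :=
  1 - gamma / Rpower (INR N) alpha.

(* Mean-field vector field, component k (1 <= k <= b), for a sequence s
   indexed by nat, with the boundary conventions s_0 = 1 and s_{b+1} = 0
   imposed separately in [is_equilibrium]. *)
Definition meanfield (l : R) (s : nat -> R) (k : nat) : R :=
  l * (s (k - 1)%nat ^ 2 - s k ^ 2) - (s k - s (S k)).

Definition is_equilibrium (l : R) (b : nat) (s : nat -> R) : Prop :=
  s 0%nat = 1 /\ s (S b) = 0 /\
  (forall k : nat, (k < b)%nat -> s (S k) <= s k) /\
  0 <= s b /\
  (forall k : nat, (1 <= k <= b)%nat -> meanfield l s k = 0).

Definition log2 (x : R) : R := ln x / ln 2.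

(** The equilibrium equations telescope to [s_(k+1) = lambda (s_k^2 - s_b^2)],
    so [s_k <= lambda^(2^k - 1)] by induction; this gives the first inequality.
    For the second it suffices that [lambda^(2^k - 1) <= (1 - lambda)/2].
    Writing [lambda = 1 - d] with [d = gamma / N^alpha], we have
    [(1 - d)^m <= exp (- d m)], and [2^k >= N^(alpha + xi)] makes
    [d (2^k - 1) >= gamma N^xi - gamma], which eventually exceeds
    [ln (2 / d) = alpha ln N + ln (2 / gamma)]. *)

From Stdlib Require Import Reals Lra Lia.
Open Scope R_scope.

Section Equilibrium.

Variables (l : R) (b : nat) (s : nat -> R).
Hypothesis Heq : is_equilibrium l b s.

Lemma equilibrium_nonneg (k : nat) : (k <= b)%nat -> 0 <= s k.
Proof.
  destruct Heq as (_ & _ & Hmon & Hsb & _).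
  enough (H : forall j, (j <= b)%nat -> 0 <= s (b - j)%nat).
  { intros Hk. replace k with (b - (b - k))%nat by lia. apply H. lia. }
  induction j as [|j IH]; intros Hj.
  - rewrite Nat.sub_0_r. exact Hsb.
  - specialize (IH ltac:(lia)). specialize (Hmon (b - S j)%nat ltac:(lia)).
    replace (S (b - S j)) with (b - j)%nat in Hmon by lia. lra.
Qed.

(* Sum of the equilibrium equations of index [> k]. *)
Lemma equilibrium_succ (k : nat) :
  (k < b)%nat -> s (S k) = l * (s k ^ 2 - s b ^ 2).
Proof.
  destruct Heq as (_ & Hb1 & _ & _ & Hmf).
  enough (H : forall j, (j < b)%nat ->
                s (b - j)%nat = l * (s (b - S j)%nat ^ 2 - s b ^ 2)).
  { intros Hk. specialize (H (b - S k)%nat ltac:(lia)).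
    replace (b - (b - S k))%nat with (S k) in H by lia.
    replace (b - S (b - S k))%nat with k in H by lia. exact H. }
  induction j as [|j IH]; intros Hj.
  - specialize (Hmf b ltac:(lia)). unfold meanfield in Hmf.
    rewrite Hb1 in Hmf. rewrite Nat.sub_0_r. nra.
  - specialize (IH ltac:(lia)). specialize (Hmf (b - S j)%nat ltac:(lia)).
    unfold meanfield in Hmf.
    replace (S (b - S j)) with (b - j)%nat in Hmf by lia.
    replace (b - S j - 1)%nat with (b - S (S j))%nat in Hmf by lia.
    rewrite IH in Hmf. nra.
Qed.

Lemma equilibrium_le_pow (k : nat) :
  0 <= l -> (k <= b)%nat -> s k <= l ^ (2 ^ k - 1).
Proof.
  intros Hl. induction k as [|k IH]; intros Hk.
  - destruct Heq as (H0 & _). rewrite H0. simpl. lra.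
  - specialize (IH ltac:(lia)).
    assert (Hsk : 0 <= s k) by (apply equilibrium_nonneg; lia).
    assert (Hsb : 0 <= s b) by (apply equilibrium_nonneg; lia).
    assert (Hsq : s k ^ 2 <= (l ^ (2 ^ k - 1)) ^ 2) by (apply pow_incr; lra).
    assert (Hexp : (2 ^ S k - 1 = 1 + (2 ^ k - 1) * 2)%nat).
    { pose proof (Nat.pow_nonzero 2 k ltac:(lia)). rewrite Nat.pow_succ_r'. lia. }
    rewrite equilibrium_succ, Hexp, pow_add, pow_mult, pow_1 by lia.
    apply Rmult_le_compat_l; nra.
Qed.

End Equilibrium.

Lemma exp_le_exp (x y : R) : x <= y -> exp x <= exp y.
Proof. intros [Hlt | ->]; [left; apply exp_increasing |]; lra. Qed.

Lemma sqr_div4_le_exp (x : R) : 0 <= x -> x * x / 4 <= exp x.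
Proof.
  intros Hx. replace x with (x / 2 + x / 2) at 3 by field.
  rewrite exp_plus. pose proof (exp_ineq1_le (x / 2)). nra.
Qed.

Lemma affine_le_exp_eventually (A B C xi : R) :
  0 < A -> 0 < xi ->
  exists L0, forall L, L0 <= L -> B * L + C <= A * exp (xi * L).
Proof.
  intros HA Hxi. set (K := A * (xi * xi) / 4).
  assert (HK : 0 < K) by (unfold K; pose proof (Rmult_lt_0_compat _ _ Hxi Hxi); nra).
  exists ((Rabs B + Rabs C) / K + 1). intros L HL.
  assert (HKL0 : K * ((Rabs B + Rabs C) / K + 1) = Rabs B + Rabs C + K)
    by (field; lra).
  assert (HL1 : 1 <= L).
  { pose proof (Rabs_pos B). pose proof (Rabs_pos C).
    assert (0 <= (Rabs B + Rabs C) / K)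
      by (apply Rmult_le_pos; [lra | left; apply Rinv_0_lt_compat; lra]).
    lra. }
  assert (Hquad : K * (L * L) <= A * exp (xi * L)).
  { replace (K * (L * L)) with (A * (xi * L * (xi * L) / 4)) by (unfold K; field).
    apply Rmult_le_compat_l; [lra|]. apply sqr_div4_le_exp. nra. }
  assert (HKL : (Rabs B + Rabs C + K) * L <= K * (L * L)).
  { rewrite <- HKL0, Rmult_assoc. apply Rmult_le_compat_l; [lra|].
    apply Rmult_le_compat_r; lra. }
  pose proof (Rle_abs B). pose proof (Rle_abs C). pose proof (Rabs_pos C).
  assert (B * L <= Rabs B * L) by (apply Rmult_le_compat_r; lra).
  nra.
Qed.

Lemma one_sub_pow_le_exp (d : R) (m : nat) :
  d <= 1 -> (1 - d) ^ m <= exp (- d * INR m).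
Proof.
  intros Hd.
  replace (exp (- d * INR m)) with (exp (- d) ^ m).
  - apply pow_incr. pose proof (exp_ineq1_le (- d)). lra.
  - rewrite <- Rpower_pow by apply exp_pos.
    unfold Rpower. rewrite ln_exp. f_equal. ring.
Qed.

Lemma one_sub_pow_le_half (d : R) (m : nat) :
  0 < d <= 1 -> ln (2 / d) <= d * INR m -> (1 - d) ^ m <= d / 2.
Proof.
  intros Hd Hm.
  apply Rle_trans with (exp (- ln (2 / d))).
  - apply Rle_trans with (1 := one_sub_pow_le_exp d m ltac:(lra)).
    apply exp_le_exp. lra.
  - rewrite exp_Ropp, exp_ln by (apply Rdiv_lt_0_compat; lra).
    right. field. lra.
Qed.

Lemma Rpower_le_pow2 (c x : R) (k : nat) :
  0 < x -> c * log2 x <= INR k -> Rpower x c <= INR (2 ^ k).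
Proof.
  intros Hx Hk. unfold log2 in Hk.
  assert (Hln2 : 0 < ln 2) by (pose proof ln_lt_2; lra).
  rewrite pow_INR, <- Rpower_pow by (simpl; lra).
  unfold Rpower. apply exp_le_exp.
  replace (INR 2) with 2 by (simpl; lra).
  apply Rmult_le_compat_r with (r := ln 2) in Hk; [|lra].
  replace (c * (ln x / ln 2) * ln 2) with (c * ln x) in Hk by (field; lra).
  exact Hk.
Qed.

Lemma lam_bounds (gamma alpha : R) (N : nat) :
  0 < gamma <= 1 -> 0 < alpha -> 1 < INR N ->
  0 < lam gamma alpha N < 1 /\ 1 - lam gamma alpha N <= gamma.
Proof.
  intros Hg Ha HN. unfold lam.
  assert (HP : 1 < Rpower (INR N) alpha).
  { rewrite <- (Rpower_O (INR N)) by lra. apply Rpower_lt; lra. }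
  assert (Hd0 : 0 < gamma / Rpower (INR N) alpha) by (apply Rdiv_lt_0_compat; lra).
  assert (Hdg : gamma / Rpower (INR N) alpha < gamma).
  { apply Rmult_lt_reg_r with (Rpower (INR N) alpha); [lra|].
    unfold Rdiv. rewrite Rmult_assoc, Rinv_l by lra. nra. }
  lra.
Qed.

Lemma lam_pow_le_one_sub_lam_half (gamma alpha xi : R) (N k : nat) :
  0 < gamma <= 1 -> 0 < alpha -> 0 < xi -> 1 < INR N ->
  alpha * ln (INR N) + (ln (2 / gamma) + gamma) <= gamma * exp (xi * ln (INR N)) ->
  (alpha + xi) * log2 (INR N) <= INR k ->
  lam gamma alpha N ^ (2 ^ k - 1) <= (1 - lam gamma alpha N) / 2.
Proof.
  intros Hg Ha Hxi HN Hlarge Hk.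
  destruct (lam_bounds gamma alpha N Hg Ha HN) as [Hlam Hdg].
  set (P := Rpower (INR N) alpha).
  set (Q := exp (xi * ln (INR N))) in Hlarge.
  assert (HP : 0 < P) by apply exp_pos.
  set (d := 1 - lam gamma alpha N) in Hdg |- *.
  replace (lam gamma alpha N) with (1 - d) by (unfold d; ring).
  assert (Hd : d = gamma / P) by (unfold d, lam; fold P; ring).
  apply one_sub_pow_le_half; [unfold d; lra|].
  assert (Hln : ln (2 / (gamma / P)) = ln (2 / gamma) + alpha * ln (INR N)).
  { replace (2 / (gamma / P)) with (2 / gamma * P) by (field; lra).
    rewrite ln_mult by (try apply Rdiv_lt_0_compat; lra).
    unfold P. rewrite ln_Rpower. ring. }
  assert (H2k : P * Q <= INR (2 ^ k)).
  { change (P * Rpower (INR N) xi <= INR (2 ^ k)).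
    unfold P. rewrite <- Rpower_plus. apply Rpower_le_pow2; lra. }
  assert (Hm : INR (2 ^ k - 1) = INR (2 ^ k) - 1).
  { rewrite minus_INR; [simpl; ring|]. pose proof (Nat.pow_nonzero 2 k). lia. }
  assert (HPQ : gamma / P * (P * Q) = gamma * Q) by (field; lra).
  rewrite Hd, Hln, Hm.
  assert (Hscaled : gamma / P * (P * Q) <= gamma / P * INR (2 ^ k))
    by (apply Rmult_le_compat_l; [left; apply Rdiv_lt_0_compat|]; lra).
  lra.
Qed.

Lemma mul_succ_le_sqrt (l x : R) :
  0 < l <= 1 -> 0 <= x <= (1 - l) / 2 -> l * (x + 1) <= sqrt l.
Proof.
  intros Hl Hx. pose proof (sqrt_sqrt l ltac:(lra)) as Hs.
  set (t := sqrt l) in *.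
  assert (Ht0 : 0 <= t) by apply sqrt_pos.
  assert (Ht1 : t <= 1) by nra.
  rewrite <- Hs in *.
  (* [t (x + 1) <= x + t <= (1 - t^2)/2 + t = 1 - (1 - t)^2 / 2 <= 1] *)
  assert (Htx : t * x <= x) by nra.
  assert (t * (x + 1) <= 1) by nra.
  nra.
Qed.

Theorem lemma16 (gamma alpha xi : R) (b : nat -> nat) :
  0 < gamma <= 1 ->
  0 < alpha < 1/4 ->
  0 < xi ->
  (forall N : nat, (1 <= N)%nat -> (1 <= b N)%nat) ->
  (exists C : R, exists N1 : nat, forall N : nat, (N1 <= N)%nat ->
      INR (b N) <= C * ln (INR N)) ->
  exists N0 : nat, forall N : nat, (N0 <= N)%nat ->
    forall s : nat -> R, is_equilibrium (lam gamma alpha N) (b N) s ->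
    forall k : nat,
      (alpha + xi) * log2 (INR N) <= INR k -> (k <= b N)%nat ->
      lam gamma alpha N * (s k + 1)
        <= lam gamma alpha N * (lam gamma alpha N ^ (2 ^ k - 1) + 1)
      /\ lam gamma alpha N * (lam gamma alpha N ^ (2 ^ k - 1) + 1)
        <= sqrt (lam gamma alpha N).
Proof.
  intros Hg Ha Hxi _ _.
  destruct (affine_le_exp_eventually gamma alpha (ln (2 / gamma) + gamma) xi)
    as [L0 HL0]; [lra | lra |].
  destruct (INR_unbounded (exp L0)) as [n Hn].
  exists (n + 2)%nat. intros N HN s Heq k Hk Hkb.
  assert (HnN : INR n <= INR N) by (apply le_INR; lia).
  assert (HN1 : 1 < INR N) by (apply lt_1_INR; lia).
  assert (HlnN : L0 <= ln (INR N)).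
  { rewrite <- (ln_exp L0). left. apply ln_increasing; [apply exp_pos | lra]. }
  destruct (lam_bounds gamma alpha N Hg ltac:(lra) HN1) as [Hlam _].
  split.
  - apply Rmult_le_compat_l; [lra|].
    apply Rplus_le_compat_r, (equilibrium_le_pow _ _ _ Heq); [lra | exact Hkb].
  - apply mul_succ_le_sqrt; [lra|]. split; [apply pow_le; lra|].
    apply lam_pow_le_one_sub_lam_half with xi;
      [exact Hg | lra | exact Hxi | exact HN1 | apply HL0, HlnN | exact Hk].
Qed.
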